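(* Let $\mathcal T$ be an atomic orbital category and $\mathcal C$ an almost essentially unital $\mathcal T$-weak indexing system. Then $\mathcal C=\mathrm{Cl}_\infty(\mathcal C\cap\underline{\mathbb F}^{sparse}_{\mathcal T})$, the smallest $\mathcal T$-weak indexing system containing all sparse elements of $\mathcal C$.
   Context: For a small category $\mathcal T$, $\mathbb F_{\mathcal T}$ is the full subcategory of $\mathrm{Fun}(\mathcal T^{op},\mathrm{Set})$ on finite coproducts of representables; $\mathcal T$ is orbital if $\mathbb F_{\mathcal T}$ has pullbacks, and atomic if every morphism of $\mathcal T$ admitting a section is an isomorphism. $\mathbb F_V:=\mathbb F_{\mathcal T,/V}$, $*_V$ terminal; for $U\to V$, $\mathrm{Res}^V_U$ is pullback and $\mathrm{Ind}^V_U$ postcomposition. A full $\mathcal T$-subcategory assigns isomorphism-closed classes $\mathcal C_V\subseteq\mathrm{Ob}\,\mathbb F_V$ stable under restriction. For $S\in\mathbb F_V$ with orbits $U$ and $T_U\in\mathbb F_U$, $\coprod_U^ST_U:=\coprod_U\mathrm{Ind}_U^VT_U$. A $\mathcal T$-weak indexing system is a full $\mathcal T$-subcategory with $\mathcal C_V\neq\emptyset\Rightarrow *_V\in\mathcal C_V$ and closed under $\coprod^S_UT_U$ for $S\in\mathcal C_V$, $T_U\in\mathcal C_U$; since intersections of weak indexing systems are weak indexing systems, every collection of finite sets is contained in a smallest one. It is almost essentially unital if whenever $S\sqcup S'\in\mathcal C_V$ is not isomorphic to $*_V$, we have $S,S'\in\mathcal C_V$. A $V$-set is sparse if it has the form $\varepsilon\cdot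 *_V\sqcup W_1\sqcup\cdots\sqcup W_n$ with $\varepsilon\in\{0,1\}$ and orbits $W_i\in\mathcal T_{/V}$ such that there is no map $W_i\to W_j$ in $\mathcal T_{/V}$ for $i\neq j$; $\mathcal C\cap\underline{\mathbb F}^{sparse}_{\mathcal T}$ is the collection $V\mapsto\{S\in\mathcal C_V\mid S\text{ sparse}\}$. *)

From mathcomp Require Import all_boot.
Unset Printing Implicit Defensive.

Record Cat := {
  Ob : Type;
  Hom : Ob -> Ob -> Type;
  idm : forall a, Hom a a;
  comp : forall a b c, Hom b c -> Hom a b -> Hom a c;
  comp_idl : forall a b (f : Hom a b), comp a b b (idm b) f = f;
  comp_idr : forall a b (f : Hom a b), comp a a b f (idm a) = f;
  comp_assoc : forall a b c d (h : Hom c d) (g : Hom b c) (f : Hom a b),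
      comp a c d h (comp a b c g f) = comp a b d (comp b c d h g) f
}.
Arguments Hom {_} _ _.
Arguments idm {_} a.
Arguments comp {_ a b c} _ _.

Section FT.
Variable T : Cat.

Definition is_iso (U V : Ob T) (f : Hom U V) : Prop :=
  exists g : Hom V U, comp g f = idm U /\ comp f g = idm V.

(* ---------- F_T : finite coproducts of representables ----------
   By Yoneda, a finite coproduct of representables  coprod_{i in I} y(U_i)
   is determined by the finite family (U_i)_{i in I}, and a morphism
   coprod_i y(U_i) -> coprod_j y(V_j) is the same as a choice, for each i,
   of a summand j and a morphism U_i -> V_j in T. *)
Record FObj := { fidx : finType; fcomp : fidx -> Ob T }.


Definition FHom (X Y : FObj) : Type :=
  forall i : fidx X, {j : fidx Y & Hom (fcomp X i) (fcomp Y j)}.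

Definition feq X Y (f g : FHom X Y) : Prop := forall i, f i = g i.
Arguments feq {X Y} f g.

Definition fid (X : FObj) : FHom X X := fun i => existT _ i (idm (fcomp X i)).

Definition fcompose X Y Z (g : FHom Y Z) (f : FHom X Y) : FHom X Z :=
  fun i => existT _ (projT1 (g (projT1 (f i))))
                    (comp (projT2 (g (projT1 (f i)))) (projT2 (f i))).
Arguments fcompose {X Y Z} g f _.

Definition is_pullback (P X Y Z : FObj) (p1 : FHom P X) (p2 : FHom P Y)
    (f : FHom X Z) (g : FHom Y Z) : Prop :=
  feq (fcompose f p1) (fcompose g p2) /\
  forall (Q : FObj) (q1 : FHom Q X) (q2 : FHom Q Y),
    feq (fcompose f q1) (fcompose g q2) ->
    exists u : FHom Q P,
      feq (fcompose p1 u) q1 /\ feq (fcompose p2 u) q2 /\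
      forall u' : FHom Q P, feq (fcompose p1 u') q1 -> feq (fcompose p2 u') q2 ->
        feq u u'.
Arguments is_pullback {P X Y Z} p1 p2 f g.

(* the representable y(V) as an object of F_T *)
Definition pt (V : Ob T) : FObj := {| fidx := unit; fcomp := fun _ => V |}.
Definition ptHom (U V : Ob T) (a : Hom U V) : FHom (pt U) (pt V) :=
  fun _ => existT (fun j : fidx (pt V) => Hom U (fcomp (pt V) j)) tt a.
Arguments ptHom {U V} a _.

Record SObj (V : Ob T) := { sobj : FObj; smap : forall i : fidx sobj, Hom (fcomp sobj i) V }.
Arguments sobj {V} s.
Arguments smap {V} s _.

Definition toPt V (S : SObj V) : FHom (sobj S) (pt V) :=
  fun i => existT (fun j : fidx (pt V) => Hom (fcomp (sobj S) i) (fcomp (pt V) j)) tt (smap S i).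
Arguments toPt {V} S _.

Definition is_sHom V (S S' : SObj V) (f : FHom (sobj S) (sobj S')) : Prop :=
  forall i, comp (smap S' (projT1 (f i))) (projT2 (f i)) = smap S i.
Arguments is_sHom {V S S'} f.

Definition s_iso V (S S' : SObj V) : Prop :=
  exists (f : FHom (sobj S) (sobj S')) (g : FHom (sobj S') (sobj S)),
    is_sHom f /\ is_sHom g /\ feq (fcompose g f) (@fid (sobj S)) /\ feq (fcompose f g) (@fid (sobj S')).
Arguments s_iso {V} S S'.

Definition starV (V : Ob T) : SObj V :=
  {| sobj := pt V; smap := fun _ => idm V |}.

Definition scoprod V (S S' : SObj V) : SObj V :=
  {| sobj := {| fidx := (fidx (sobj S) + fidx (sobj S'))%type;
                fcomp := fun k => match k with inl i => fcomp (sobj S) i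
                                             | inr i => fcomp (sobj S') i end |};
     smap := fun k => match k with inl i => smap S i | inr i => smap S' i end |}.
Arguments scoprod {V} S S'.

Definition Ind U V (a : Hom U V) (S : SObj U) : SObj V :=
  {| sobj := sobj S; smap := fun i => comp a (smap S i) |}.
Arguments Ind {U V} a S.

(* \coprod^S_U T_U := \coprod_{orbits U of S} Ind^V_U T_U ;
   the orbits of S are its summands (fcomp (sobj S) i, smap S i), i in fidx *)
Definition orbit_coprod V (S : SObj V)
    (Tf : forall i : fidx (sobj S), SObj (fcomp (sobj S) i)) : SObj V :=
  {| sobj := {| fidx := {i : fidx (sobj S) & fidx (sobj (Tf i))};
                fcomp := fun p => fcomp (sobj (Tf (tag p))) (tagged p) |};
     smap := fun p => comp (smap S (tag p)) (smap (Tf (tag p)) (tagged p)) |}.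
Arguments orbit_coprod {V} S Tf.

Definition collection := forall V : Ob T, SObj V -> Prop.

(* full T-subcategory: isomorphism-closed and stable under restriction
   (Res^V_U S = pullback of S -> V along U -> V, computed in F_T) *)
Definition full_Tsubcat (C : collection) : Prop :=
  (forall V (S S' : SObj V), C V S -> s_iso S S' -> C V S') /\
  (forall U V (a : Hom U V) (S : SObj V) (P : FObj)
          (p1 : FHom P (sobj S)) (p2 : FHom P (pt U)),
     is_pullback p1 p2 (toPt S) (ptHom a) ->
     C V S -> C U {| sobj := P; smap := fun i => projT2 (p2 i) |}).

Definition weak_indexing_system (C : collection) : Prop :=
  full_Tsubcat C /\
  (forall V, (exists S, C V S) -> C V (starV V)) /\
  (forall V (S : SObj V) (Tf : forall i, SObj (fcomp (sobj S) i)),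
     C V S -> (forall i, C (fcomp (sobj S) i) (Tf i)) -> C V (orbit_coprod S Tf)).

Definition almost_essentially_unital (C : collection) : Prop :=
  forall V (S S' : SObj V), C V (scoprod S S') -> ~ s_iso (scoprod S S') (starV V) ->
    C V S /\ C V S'.

(* the V-set  eps * *_V |_| W_1 |_| ... |_| W_n *)
Definition sparse_model V (eps : bool) (n : nat) (W : 'I_n -> {X : Ob T & Hom X V})
  : SObj V :=
  {| sobj := {| fidx := ('I_eps + 'I_n)%type;
                fcomp := fun k => match k with inl _ => V | inr i => projT1 (W i) end |};
     smap := fun k => match k return Hom (match k with inl _ => V | inr i => projT1 (W i) end) V
                      with inl _ => idm V | inr i => projT2 (W i) end |}.
Arguments sparse_model {V} eps {n} W.

Definition sparse V (S : SObj V) : Prop :=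
  exists (eps : bool) (n : nat) (W : 'I_n -> {X : Ob T & Hom X V}),
    (forall i j : 'I_n, i != j ->
       ~ exists h : Hom (projT1 (W i)) (projT1 (W j)), comp (projT2 (W j)) h = projT2 (W i)) /\
    s_iso S (sparse_model eps W).
Arguments sparse {V} S.

Definition sparse_part (C : collection) : collection :=
  fun V S => C V S /\ sparse S.

Definition Cl_infty (D : collection) : collection :=
  fun V S => forall E : collection, weak_indexing_system E ->
    (forall V' (S' : SObj V'), D V' S' -> E V' S') -> E V S.

End FT.
Arguments is_iso {T U V} f.
Arguments FHom {T} X Y.
Arguments is_pullback {T P X Y Z} p1 p2 f g.
Arguments SObj {T} V.
Arguments sobj {T V} s.
Arguments smap {T V} s _.
Arguments Cl_infty {T} D V S.
Arguments sparse_part {T} C V S.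
Arguments weak_indexing_system {T} C.
Arguments almost_essentially_unital {T} C.
Arguments sparse {T V} S.

Definition atomic (T : Cat) : Prop :=
  forall (U V : Ob T) (f : Hom U V), (exists s : Hom V U, comp f s = idm V) -> is_iso f.

Definition orbital (T : Cat) : Prop :=
  forall (X Y Z : FObj T) (f : FHom X Z) (g : FHom Y Z),
    exists (P : FObj T) (p1 : FHom P X) (p2 : FHom P Y), is_pullback p1 p2 f g.

From mathcomp Require Import all_boot.
From Stdlib Require Import Eqdep_dec Classical.

(* Induction on the number of orbits of S in C_V.  If no orbit of S maps to a
   different orbit over V, then S is sparse.  Otherwise pick h : W_a -> W_b over
   V with a <> b.  Then S is the coproduct, over the orbits x of S minus W_a, of
   T_x = *_(W_x) for x <> b and T_b = *_(W_b) + W_a, the orbit W_a attached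
   along h.  By almost essential unitality S minus W_a lies in C, and it has
   fewer orbits.  Each T_x is sparse and lies in C: *_(W_x) because
   Res^V_(W_x) S is a nonempty member of C, and *_(W_b) + W_a because it is the
   part of Res^V_(W_b) S made of the diagonal orbit and the graph of h, which
   atomicity identifies with W_b and W_a. *)

#[local] Arguments fidx {T}.
#[local] Arguments fcomp {T}.
#[local] Arguments pt {T}.
#[local] Arguments ptHom {T U V}.
#[local] Arguments fid {T}.
#[local] Arguments toPt {T V}.
#[local] Arguments s_iso {T V}.
#[local] Arguments starV {T}.
#[local] Arguments scoprod {T V}.
#[local] Arguments orbit_coprod {T V}.
#[local] Arguments sparse_model {T V} eps {n}.

Local Notation orb S i := (fcomp (sobj S) i).

Lemma existT_inj {I : eqType} (P : I -> Type) (i : I) (x y : P i) :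
  existT P i x = existT P i y -> x = y.
Proof. exact: (inj_pair2_eq_dec I (@eq_comparable I)). Qed.

Lemma ord_le1_eq {n} (n1 : n <= 1) (i j : 'I_n) : i = j.
Proof.
have val0 (k : 'I_n) : val k = 0.
  by apply/eqP; rewrite -leqn0 -ltnS (leq_trans (ltn_ord k) n1).
by apply: val_inj; rewrite !val0.
Qed.

Lemma ord_bool_true {c : bool} : 'I_c -> c.
Proof. by case: c => // -[]. Qed.

Section Slices.
Context {T : Cat}.
Implicit Types U V : Ob T.

Definition castF {I : Type} (F : I -> Ob T) {x y : I} (e : x = y) : Hom (F x) (F y) :=
  match e in _ = y' return Hom (F x) (F y') with erefl => idm (F x) end.

Lemma castF_id {I : eqType} (F : I -> Ob T) {x : I} (e : x = x) : castF F e = idm (F x).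
Proof. by rewrite (eq_irrelevance e erefl). Qed.

Lemma existT_castF {I : Type} (F : I -> Ob T) {x y : I} (e : y = x) :
  existT (fun j => Hom (F x) (F j)) y (castF F (esym e)) = existT _ x (idm (F x)).
Proof. by case: x / e. Qed.

Lemma castF_comp_of_existT {I : eqType} {F : I -> Ob T} {X : Ob T} {j a : I}
    {x : Hom X (F j)} {y : Hom X (F a)} (e : j = a) :
  existT (fun j => Hom X (F j)) j x = existT _ a y -> comp (castF F e) x = y.
Proof.
by case: a / e y => y /(@existT_inj _ (fun j => Hom X (F j))) ->; rewrite comp_idl.
Qed.

Lemma smap_castF {V} {S : SObj V} {x y : fidx (sobj S)} (e : x = y) :
  comp (smap S y) (castF (fcomp (sobj S)) e) = smap S x.
Proof. by case: y / e; rewrite comp_idr. Qed.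

Lemma s_iso_refl {V} (S : SObj V) : s_iso S S.
Proof.
by exists (fid _), (fid _); do ![split] => i; rewrite /fcompose /= ?comp_idl ?comp_idr.
Qed.

Lemma s_iso_sym {V} {S S' : SObj V} : s_iso S S' -> s_iso S' S.
Proof. by case=> f [g [fS [gS [gf fg]]]]; exists g, f. Qed.

Section Orbitwise.
Variables (V : Ob T) (S S' : SObj V).
Local Notation I := (fidx (sobj S)).
Local Notation I' := (fidx (sobj S')).

Lemma s_iso_orbitwise (phi : I -> I') (psi : I' -> I) :
  cancel phi psi -> cancel psi phi ->
  forall (e : forall i, Hom (orb S i) (orb S' (phi i)))
         (e' : forall i, Hom (orb S' (phi i)) (orb S i)),
  (forall i, comp (e' i) (e i) = idm _) -> (forall i, comp (e i) (e' i) = idm _) ->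
  (forall i, comp (smap S' (phi i)) (e i) = smap S i) -> s_iso S S'.
Proof.
move=> phiK psiK e e' e'e ee' eS.
pose g : FHom (sobj S') (sobj S) := fun j =>
  existT _ (psi j) (comp (e' (psi j)) (castF (fcomp (sobj S')) (esym (psiK j)))).
exists (fun i => existT _ (phi i) (e i)), g; do ![split].
- exact: eS.
- move=> j /=; rewrite -[smap S (psi j)]eS -comp_assoc [comp (e _) _]comp_assoc.
  by rewrite ee' comp_idl smap_castF.
- move=> i; rewrite /fcompose /fid /= -comp_assoc.
  move: (phiK i) (psiK (phi i)); move: (psi (phi i)) => k ki.
  by subst k => c; rewrite castF_id comp_idl e'e.
- move=> j; rewrite /fcompose /fid /= comp_assoc ee' comp_idl.
  exact: existT_castF.
Qed.

End Orbitwise.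

Definition suborbits {V} (X : SObj V) (p : pred (fidx (sobj X))) : SObj V :=
  {| sobj := {| fidx := {i : fidx (sobj X) | p i}; fcomp := fun i => orb X (val i) |};
     smap := fun i => smap X (val i) |}.

Lemma s_iso_suborbits_split {V} (X : SObj V) (p : pred (fidx (sobj X))) :
  s_iso X (scoprod (suborbits X p) (suborbits X (predC p))).
Proof.
apply: s_iso_sym; set Y := scoprod _ _.
pose phi (k : fidx (sobj Y)) := match k with inl r => val r | inr r => val r end.
pose psi x : fidx (sobj Y) :=
  match sumbool_of_bool (p x) with
  | left px => inl (exist _ x px)
  | right px => inr (exist _ x (negbT px)) end.
pose e k : Hom (orb Y k) (orb X (phi k)) := if k is inl _ then idm _ else idm _.
pose e' k : Hom (orb X (phi k)) (orb Y k) := if k is inl _ then idm _ else idm _.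
apply: (@s_iso_orbitwise _ _ _ phi psi _ _ e e').
- case=> -[x px]; rewrite /psi /=; case: (sumbool_of_bool (p x)) => px';
    by [congr inl; apply: val_inj | congr inr; apply: val_inj | exfalso; rewrite /= px' in px].
- by move=> x; rewrite /psi; case: (sumbool_of_bool (p x)).
- by case=> r; rewrite comp_idl.
- by case=> r; rewrite comp_idl.
- by case=> r; rewrite comp_idr.
Qed.

Lemma not_s_iso_star {V} (X : SObj V) (i j : fidx (sobj X)) : i != j -> ~ s_iso X (starV V).
Proof.
move=> /eqP nij [f [g [_ [_ [gf _]]]]]; apply: nij.
have /(f_equal (@projT1 _ _)) /= <- := gf i.
have /(f_equal (@projT1 _ _)) /= <- := gf j.
by case: (projT1 (f i)); case: (projT1 (f j)).
Qed.

Lemma sparse_model_sparse {V eps n} (W : 'I_n -> {X : Ob T & Hom X V}) :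
  n <= 1 -> sparse (sparse_model eps W).
Proof.
move=> n1; exists eps, n, W; split; last exact: s_iso_refl.
by move=> i j; rewrite (ord_le1_eq n1 i j) eqxx.
Qed.

Lemma sparse_of_unrelated_orbits {V} (S : SObj V) :
  (forall x y, x != y -> ~ exists h, comp (smap S y) h = smap S x) -> sparse S.
Proof.
move=> unrelated.
pose W (k : 'I_#|fidx (sobj S)|) := existT (fun X => Hom X V) _ (smap S (enum_val k)).
exists false, _, W; split.
  by move=> i j nij; apply: unrelated; rewrite (inj_eq enum_val_inj).
pose phi (k : fidx (sobj (sparse_model false W))) : fidx (sobj S) :=
  match k with inl z => False_rect _ (notF (ltn_ord z)) | inr k => enum_val k end.
pose e k : Hom (orb (sparse_model false W) k) (orb S (phi k)) :=
  match k with inl z => False_rect _ (notF (ltn_ord z)) | inr _ => idm _ end.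
pose e' k : Hom (orb S (phi k)) (orb (sparse_model false W) k) :=
  match k with inl z => False_rect _ (notF (ltn_ord z)) | inr _ => idm _ end.
apply: s_iso_sym; apply: (@s_iso_orbitwise _ _ _ phi (fun x => inr (enum_rank x)) _ _ e e').
- by case=> [z|k]; [case: (notF (ltn_ord z)) | rewrite /= enum_valK].
- exact: enum_rankK.
- by case=> [z|k]; [case: (notF (ltn_ord z)) | exact: comp_idl].
- by case=> [z|k]; [case: (notF (ltn_ord z)) | exact: comp_idl].
- by case=> [z|k]; [case: (notF (ltn_ord z)) | exact: comp_idr].
Qed.

Lemma s_iso_star_sparse_model {V} (W : 'I_0 -> {X : Ob T & Hom X V}) :
  s_iso (starV V) (sparse_model true W).
Proof.
pose phi (u : unit) : fidx (sobj (sparse_model true W)) := inl ord0.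
apply: (@s_iso_orbitwise _ (starV V) _ phi (fun _ => tt) _ _ (fun _ => idm V) (fun _ => idm V)).
- by case.
- by case=> [z|z]; [rewrite (ord1 z) | case: (notF (ltn_ord z))].
- by move=> u; exact: comp_idl.
- by move=> u; exact: comp_idl.
- by move=> u; exact: comp_idl.
Qed.

Lemma pullback_lift {V} {S : SObj V} {U} {beta : Hom U V} {P : FObj T}
    {p1 : FHom P (sobj S)} {p2 : FHom P (pt U)} :
  is_pullback p1 p2 (toPt S) (ptHom beta) ->
  forall {X x} (k : Hom X (orb S x)) (m : Hom X U), comp (smap S x) k = comp beta m ->
  exists i (e : Hom X (fcomp P i)),
    existT (fun j => Hom X (orb S j)) (projT1 (p1 i)) (comp (projT2 (p1 i)) e) = existT _ x k /\
    comp (projT2 (p2 i)) e = m.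
Proof.
case=> _ univ X x k m km.
have [|u [u1 [u2 _]]] := univ (pt X) (fun _ => existT _ x k) (fun _ => existT _ tt m).
  by move=> ?; rewrite /fcompose /= km.
exists (projT1 (u tt)), (projT2 (u tt)); split; first exact: u1 tt.
move: (u2 tt); rewrite /fcompose /=.
by case: (p2 (projT1 (u tt))) => -[] f /(@existT_inj _ (fun _ => Hom X U)).
Qed.

(* The orbit W_a is indexed by 'I_(x == b): it is attached to x exactly when x = b. *)
Definition attach_orbit {V} {S : SObj V} {a b} (h : Hom (orb S a) (orb S b))
    (x : fidx (sobj S)) : SObj (orb S x) :=
  sparse_model true (fun k : 'I_(x == b) =>
    existT _ (orb S a) (comp (castF (fcomp (sobj S)) (esym (eqP (ord_bool_true k)))) h)).

Lemma s_iso_orbit_coprod_attach {V} {S : SObj V} {a b} {h : Hom (orb S a) (orb S b)} :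
  a != b -> comp (smap S b) h = smap S a ->
  s_iso (orbit_coprod (suborbits S (predC1 a)) (fun x => attach_orbit h (val x))) S.
Proof.
move=> nab hab; set O := orbit_coprod _ _.
pose phi (p : fidx (sobj O)) : fidx (sobj S) :=
  let: existT x t := p in if t is inl _ then val x else a.
pose e p : Hom (orb O p) (orb S (phi p)) :=
  let: existT x t := p in if t is inl _ then idm _ else idm _.
pose e' p : Hom (orb S (phi p)) (orb O p) :=
  let: existT x t := p in if t is inl _ then idm _ else idm _.
have nba : predC1 a b by rewrite /= eq_sym.
have kb : 'I_(b == b) by exists 0; rewrite eqxx.
pose psi (y : fidx (sobj S)) : fidx (sobj O) :=
  if insub y is Some x then existT _ x (inl ord0) else existT _ (exist _ b nba) (inr kb).
apply: (@s_iso_orbitwise _ O S phi psi _ _ e e').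
- case=> x [u|k] /=; rewrite /psi.
    by rewrite valK (ord1 u).
  rewrite insubN /= ?eqxx //.
  have xb : x = exist _ b nba by apply: val_inj; apply/eqP/(ord_bool_true k).
  by subst x; rewrite (ord_le1_eq (leq_b1 _) kb k).
- by move=> y; rewrite /psi; case: insubP => [x _ <- | /negPn/eqP ->].
- by case=> x [u|k]; exact: comp_idl.
- by case=> x [u|k]; exact: comp_idl.
- case=> x [u|k] /=; first by rewrite !comp_idr.
  by rewrite comp_idr comp_assoc smap_castF hab.
Qed.

End Slices.

Lemma atomic_sectionK (T : Cat) : atomic T ->
  forall (U V : Ob T) (f : Hom U V) (s : Hom V U), comp f s = idm V -> comp s f = idm U.
Proof.
move=> hat U V f s fs; have [g [gf fg]] := hat _ _ f (ex_intro _ s fs).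
suff -> : s = g by [].
by rewrite -[s]comp_idl -gf -comp_assoc fs comp_idr.
Qed.
Arguments atomic_sectionK {T} _ {U V f s}.

Section WeakIndexingSystems.
Context {T : Cat} {E : collection T}.
Hypothesis hE : weak_indexing_system E.
Implicit Types V : Ob T.

Lemma wis_iso {V} {S S' : SObj V} : E V S -> s_iso S S' -> E V S'.
Proof. exact: hE.1.1. Qed.

Lemma wis_orbit_coprod {V} {S : SObj V} {Tf : forall i, SObj (orb S i)} :
  E V S -> (forall i, E _ (Tf i)) -> E V (orbit_coprod S Tf).
Proof. exact: hE.2.2. Qed.

Lemma wis_star_orbit {V} {S : SObj V} x : orbital T -> E V S -> E (orb S x) (starV (orb S x)).
Proof.
move=> hor ES; have [P [p1 [p2 pb]]] := hor _ _ _ (toPt S) (ptHom (smap S x)).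
by apply: hE.2.1; eexists; exact: hE.1.2 _ _ _ _ _ _ _ pb ES.
Qed.

End WeakIndexingSystems.

Section Closure.
Context {T : Cat} (D : collection T).

Lemma Cl_infty_wis : weak_indexing_system (Cl_infty D).
Proof.
split; [split|split].
- by move=> V S S' DS iso E hE hD; exact: (wis_iso hE (DS E hE hD) iso).
- by move=> U V a S P p1 p2 pb DS E hE hD; exact: hE.1.2 _ _ _ _ _ _ _ pb (DS E hE hD).
- by move=> V [S DS] E hE hD; apply: hE.2.1; exists S; exact: DS.
- move=> V S Tf DS DT E hE hD.
  by apply: (wis_orbit_coprod hE (DS E hE hD)) => i; exact: DT.
Qed.

Lemma sub_Cl_infty {V} (S : SObj V) : D V S -> Cl_infty D V S.
Proof. by move=> DS E _ hD; exact: hD. Qed.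

Lemma Cl_infty_min (E : collection T) : weak_indexing_system E ->
  (forall V (S : SObj V), D V S -> E V S) -> forall V (S : SObj V), Cl_infty D V S -> E V S.
Proof. by move=> hE hD V S DS; exact: DS E hE hD. Qed.

End Closure.

Section AlmostUnital.
Variables (T : Cat) (C : collection T).
Hypotheses (hat : atomic T) (hor : orbital T).
Hypotheses (hC : weak_indexing_system C) (hu : almost_essentially_unital C).
Implicit Types V : Ob T.

Lemma C_suborbits {V} (X : SObj V) (p : pred (fidx (sobj X))) i j :
  C V X -> p i -> i != j -> C V (suborbits X p).
Proof.
move=> CX pi nij; set Y := scoprod (suborbits X p) (suborbits X (predC p)).
have CY : C V Y := wis_iso hC CX (s_iso_suborbits_split X p).
suff nstar : ~ s_iso Y (starV V) by have [] := hu _ _ _ CY nstar.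
case: (boolP (p j)) => pj.
- apply: (@not_s_iso_star _ _ Y (inl (exist _ i pi)) (inl (exist _ j pj))).
  by apply: contra_neq nij => -[].
- exact: (@not_s_iso_star _ _ Y (inl (exist _ i pi)) (inr (exist _ j pj))).
Qed.

Lemma C_star_plus_orbit {V} (S : SObj V) a b (hs : 'I_1 -> Hom (orb S a) (orb S b)) :
  C V S -> a != b -> (forall k, comp (smap S b) (hs k) = smap S a) ->
  C (orb S b) (sparse_model true (fun k => existT _ (orb S a) (hs k))).
Proof.
move=> CS nab hab.
have [P [p1 [p2 pb]]] := hor _ _ _ (toPt S) (ptHom (smap S b)).
pose R : SObj (orb S b) := {| sobj := P; smap := fun i => projT2 (p2 i) |}.
have CR : C _ R := hC.1.2 _ _ _ _ _ _ _ pb CS.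
have [i1 [e1 [p1e1 p2e1]]] := pullback_lift pb (idm _) (idm _) erefl.
have hab0 : comp (smap S a) (idm _) = comp (smap S b) (hs ord0) by rewrite comp_idr hab.
have [i2 [e2 [p1e2 p2e2]]] := pullback_lift pb (idm _) (hs ord0) hab0.
have /= E1 := congr1 (@projT1 _ _) p1e1.
have /= E2 := congr1 (@projT1 _ _) p1e2.
pose q := comp (castF (fcomp (sobj S)) E2) (projT2 (p1 i2)).
have qe2 : comp q e2 = idm _ by rewrite -comp_assoc; exact: castF_comp_of_existT p1e2.
have e1p2 : comp e1 (projT2 (p2 i1)) = idm _ := atomic_sectionK hat p2e1.
have e2q : comp e2 q = idm _ := atomic_sectionK hat qe2.
have n21 : i2 != i1 by apply: contra_neq nab => i21; rewrite -E1 -E2 i21.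
have CR12 : C _ (suborbits R (pred2 i1 i2)).
  by apply: (@C_suborbits _ R _ i1 i2); rewrite /= ?eqxx // eq_sym.
apply: (wis_iso hC CR12); apply: s_iso_sym.
set M := sparse_model _ _; set R12 := suborbits _ _.
have [pi1 pi2] : pred2 i1 i2 i1 /\ pred2 i1 i2 i2 by rewrite /= !eqxx orbT.
pose phi (k : fidx (sobj M)) : fidx (sobj R12) :=
  if k is inl _ then exist _ i1 pi1 else exist _ i2 pi2.
pose psi (r : fidx (sobj R12)) : fidx (sobj M) := if val r == i1 then inl ord0 else inr ord0.
pose e k : Hom (orb M k) (orb R12 (phi k)) := if k is inl _ then e1 else e2.
pose e' k : Hom (orb R12 (phi k)) (orb M k) := if k is inl _ then projT2 (p2 i1) else q.
apply: (@s_iso_orbitwise _ _ M R12 phi psi _ _ e e').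
- by case=> u; rewrite /psi /= ?eqxx ?(negbTE n21) (ord1 u).
- case=> i pi; rewrite /psi /=; apply: val_inj => /=.
  by case: eqP => [-> // | ne]; case/pred2P: pi.
- by case.
- by case.
- by case=> u //=; rewrite (ord1 u).
Qed.

Lemma C_star_plus_opt_orbit {V} (S : SObj V) a x (c : bool) (hs : 'I_c -> Hom (orb S a) (orb S x)) :
  C V S -> a != x -> (forall k, comp (smap S x) (hs k) = smap S a) ->
  C (orb S x) (sparse_model true (fun k => existT _ (orb S a) (hs k))).
Proof.
move=> CS nax hax; case: c hs hax => hs hax; first exact: C_star_plus_orbit.
exact: (wis_iso hC (wis_star_orbit hC x hor CS) (s_iso_star_sparse_model _)).
Qed.

Lemma C_sub_Cl_sparse {V} (S : SObj V) : C V S -> Cl_infty (sparse_part C) V S.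
Proof.
move: {2}#|fidx (sobj S)| (erefl #|fidx (sobj S)|) => n; elim/ltn_ind: n V S.
move=> n IH V S cardS CS.
case: (classic (exists a b, a != b /\ exists h, comp (smap S b) h = smap S a)); last first.
  move=> unrelated; apply: sub_Cl_infty; split => //.
  apply: sparse_of_unrelated_orbits => x y nxy [h hxy].
  by apply: unrelated; exists x, y; split => //; exists h.
case=> a [b [nab [h hab]]].
apply: (wis_iso (Cl_infty_wis _) _ (s_iso_orbit_coprod_attach nab hab)).
apply: (wis_orbit_coprod (Cl_infty_wis _)) => [|x].
- apply: (IH _ _ _ _ erefl); last by apply: (@C_suborbits _ S _ b a); rewrite //= eq_sym.
  by rewrite -cardS card_sig cardC1 ltn_predL; apply/card_gt0P; exists a.
- apply: sub_Cl_infty; split; last exact: sparse_model_sparse (leq_b1 _).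
  apply: (@C_star_plus_opt_orbit _ S a (val x)) => //; first by rewrite eq_sym; exact: (valP x).
  by move=> k; rewrite comp_assoc smap_castF.
Qed.

End AlmostUnital.

Theorem mainTheorem20 (T : Cat) (hat : atomic T) (hor : orbital T)
  (C : collection T) (hC : weak_indexing_system C)
  (hu : almost_essentially_unital C) :
  forall (V : Ob T) (S : SObj V), C V S <-> Cl_infty (sparse_part C) V S.
Proof.
move=> V S; split; first exact: C_sub_Cl_sparse.
by apply: Cl_infty_min => // V' S' [].
Qed.
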